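(* Let $\mathfrak g=\mathfrak w_6$ be the real Lie algebra with basis $X_1,X_2,X_3,X_4,Z_1,Z_2$ whose only nonzero brackets (up to antisymmetry) are $[X_1,X_3]=-\frac12Z_1$, $[X_1,X_4]=-\frac12Z_2$, $[X_2,X_3]=-\frac12Z_2$, $[X_2,X_4]=\frac12Z_1$, with the abelian complex structure $J_1$ given by $J_1X_1=X_2$, $J_1X_3=-X_4$, $J_1Z_1=-Z_2$. Let $X=\Gamma\backslash W_6$ for a co-compact lattice $\Gamma$ in the corresponding simply connected group. With $T_1=X_1-iX_2$, $T_2=X_3+iX_4$, $W=Z_1+iZ_2$ (so $[\overline T_1,T_2]=-W$, $[\overline T_2,T_1]=\overline W$, and all other brackets among $T_1,T_2,W$ and their conjugates vanish) and dual $(1,0)$-forms $\omega^1,\omega^2,\omega^3$, write $\mu=\sum_{a,b=1}^3\mu^a_b\,\overline\omega^b\otimes e_a$ with $(e_1,e_2,e_3)=(T_1,T_2,W)$. Then: (i) $\mu$ is $\overline\partial$-closed iff $\mu^2_2=\mu^2_3=0$, and $\dim_{\mathbb C}H^1(X,\Theta_X)=6$, with harmonic representatives those closed $\mu$ with additionally $\mu^3_1=0$; (ii) a closed $\mu$ satisfies Condition A iff $\mu^1_1=\mu^1_3=0$, so the abelian deformations form a 4-dimensional subspace of $H^1(X,\Theta_X)$; (iii) for a harmonic $\mu$ the second Kuranishi term is $\phi_2=\mu^1_1\mu^3_3\,\overline\omega^2\otimes T_2$, and the deformation is integrable iff $\mu^1_3=0$, so the Kuranishi space has dimension 5.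
   Context: Condition A for $\mu$ (with $n=2$ indices $j,k\in\{1,2\}$ for $T_1,T_2$ and one central index for $W$): writing $[\overline T_k,T_j]=E_{kj}W+F_{kj}\overline W$, Condition A is $\sum_i(\mu^i_jF_{ki}-\mu^i_kF_{ji})=0$ for all $j,k\in\{1,2\}$ and $\sum_i\mu^i_3F_{ji}=0$ for all $j$, where $i$ ranges over $\{1,2\}$. The operator $\overline\partial$ on $\mathfrak g^{*(0,1)}\otimes\mathfrak g^{1,0}$ is given by $\overline\partial V=\sum_p\overline\omega^p\otimes[\overline e_p,V]^{1,0}$ for $V\in\mathfrak g^{1,0}$, $\overline\partial\overline\sigma=(d\overline\sigma)^{(0,2)}$ (which vanishes here), and $\overline\partial(\overline\sigma\otimes V)=\overline\partial\overline\sigma\otimes V-\overline\sigma\wedge\overline\partial V$; $H^1(X,\Theta_X)\cong\ker\overline\partial_1/\operatorname{im}\overline\partial_0$ computed on invariant elements, harmonic representatives being the orthogonal complement of $\operatorname{im}\overline\partial_0$ in $\ker\overline\partial_1$ for the Hermitian inner product making $\{\overline\omega^b\otimes e_a\}$ orthogonal. The Kuranishi series is $\phi_1=\mu$, $\phi_r=\frac12\sum_{s<r}\overline\partial^*\mathcal G\{\phi_s,\phi_{r-s}\}$ with $\{\cdot,\cdot\}$ the Schouten–Nijenhuis bracket; the Kuranishi space is the locus of harmonic $\mu$ near $0$ for which the resulting $\Phi=\sum\phi_r$ satisfies $\overline\partial\Phi+\frac12\{\Phi,\Phi\}=0$. *)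

From HB Require Import structures.
From mathcomp Require Import all_boot all_order all_algebra.
From mathcomp Require Import all_classical all_reals all_analysis.

Set Implicit Arguments.
Unset Strict Implicit.
Unset Printing Implicit Defensive.

Import Order.TTheory GRing.Theory Num.Theory.
Import numFieldNormedType.Exports.
Local Open Scope classical_set_scope.
Local Open Scope ring_scope.

(* Setting.  C is the field of complex numbers (we work over an arbitrary     *)
(* numClosedFieldType, i.e. an algebraically closed field with conjugation    *)
(* z^* and imaginary unit 'i, of which the complex numbers are an instance).  *)
(* Everything is computed on left-invariant objects, i.e. at the level of the *)
(* Lie algebra g = w_6.                                        *)

Section W6.
Variable C : numClosedFieldType.

Definition o0 : 'I_3 := @Ordinal 3 0 isT.
Definition o1 : 'I_3 := @Ordinal 3 1 isT.
Definition o2 : 'I_3 := @Ordinal 3 2 isT.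

Definition ev n (i : 'I_n) : 'rV[C]_n := delta_mx 0 i.

(* basis indices: 0,1,2,3 = X1,X2,X3,X4 ; 4,5 = Z1,Z2 (coordinates in C^6)   *)
Definition w6br0 (i j : 'I_6) : 'rV[C]_6 :=
  let Z1 := ev (@Ordinal 6 4 isT) in
  let Z2 := ev (@Ordinal 6 5 isT) in
  if (i == 0 :> nat) && (j == 2 :> nat) then - 2^-1 *: Z1
  else if (i == 0 :> nat) && (j == 3 :> nat) then - 2^-1 *: Z2
  else if (i == 1 :> nat) && (j == 2 :> nat) then - 2^-1 *: Z2
  else if (i == 1 :> nat) && (j == 3 :> nat) then 2^-1 *: Z1
  else 0.

Definition w6br (i j : 'I_6) : 'rV[C]_6 := w6br0 i j - w6br0 j i.

Definition lieC (u v : 'rV[C]_6) : 'rV[C]_6 :=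
  \sum_(i < 6) \sum_(j < 6) (u 0 i * v 0 j) *: w6br i j.

Definition T1 : 'rV[C]_6 := ev (@Ordinal 6 0 isT) - 'i *: ev (@Ordinal 6 1 isT).
Definition T2 : 'rV[C]_6 := ev (@Ordinal 6 2 isT) + 'i *: ev (@Ordinal 6 3 isT).
Definition Wv : 'rV[C]_6 := ev (@Ordinal 6 4 isT) + 'i *: ev (@Ordinal 6 5 isT).

(* rows e_1,e_2,e_3 = T1,T2,W (a basis of g^{1,0} for J_1) *)
Definition F10 : 'M[C]_(3, 6) :=
  \matrix_(a < 3) (if a == o0 then T1 else if a == o1 then T2 else Wv).

Definition Fr : 'M[C]_6 := @col_mx C 3 3 6 F10 (map_mx (fun z => z^*) F10).

(* Lie bracket in frame coordinates x, y : 'rV_6, i.e. the vector            *)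
(* sum_p x_p f_p with (f_0..f_5) = (e_1,e_2,e_3,conj e_1,conj e_2,conj e_3). *)
Definition brk (x y : 'rV[C]_6) : 'rV[C]_6 :=
  lieC (x *m Fr) (y *m Fr) *m invmx Fr.

Definition emb10 (v : 'rV[C]_3) : 'rV[C]_6 := @row_mx C 1 3 3 v 0.
Definition emb01 (v : 'rV[C]_3) : 'rV[C]_6 := @row_mx C 1 3 3 0 v.
Definition pr10 (x : 'rV[C]_6) : 'rV[C]_3 := @lsubmx C 1 3 3 x.
Definition pr01 (x : 'rV[C]_6) : 'rV[C]_3 := @rsubmx C 1 3 3 x.

Definition act (x v : 'rV[C]_3) : 'rV[C]_3 := pr10 (brk (emb01 x) (emb10 v)).
Definition br01 (x y : 'rV[C]_3) : 'rV[C]_3 := pr01 (brk (emb01 x) (emb01 y)).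

(* q = 0 : v : 'rV_3, the vector sum_a v_a e_a.                               *)
(* q = 1 : mu : 'M_3, the form sum_{a,b} mu a b  conj(omega^b) (x) e_a        *)
(*         (so mu a b = mu^a_b : row = index of e_a, column = form index).    *)
(* q = 2 : psi : 'M_3, the form sum_{a,k} psi a k (conj(om^p_k) /\ conj(om^q_k)) (x) e_a *)
(*         where (p_k,q_k) = (0,1),(0,2),(1,2) for k = 0,1,2.                 *)
(* q = 3 : chi : 'rV_3, the form sum_a chi_a conj(om^0/\om^1/\om^2) (x) e_a.  *)
Definition pp (k : 'I_3) : 'I_3 := if k == o2 then o1 else o0.
Definition qq (k : 'I_3) : 'I_3 := if k == o0 then o1 else o2.

Definition ev1 (mu : 'M[C]_3) (x : 'rV[C]_3) : 'rV[C]_3 := x *m mu^T.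
Definition ev2 (psi : 'M[C]_3) (x y : 'rV[C]_3) : 'rV[C]_3 :=
  \sum_(k < 3) (x 0 (pp k) * y 0 (qq k) - x 0 (qq k) * y 0 (pp k)) *: (col k psi)^T.

Definition mk2 (f : 'rV[C]_3 -> 'rV[C]_3 -> 'rV[C]_3) : 'M[C]_3 :=
  \matrix_(a, k) (f (ev (pp k)) (ev (qq k))) 0 a.

(* dbar : Chevalley-Eilenberg differential of g^{0,1} with coefficients in  *)
(* the module g^{1,0}, Xbar . V = [Xbar,V]^{1,0}.                            *)
Definition dbar0 (v : 'rV[C]_3) : 'M[C]_3 := \matrix_(a, b) (act (ev b) v) 0 a.

Definition dbar1 (mu : 'M[C]_3) : 'M[C]_3 :=
  mk2 (fun x y => act x (ev1 mu y) - act y (ev1 mu x) - ev1 mu (br01 x y)).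

Definition dbar2 (psi : 'M[C]_3) : 'rV[C]_3 :=
  let x0 := ev o0 in let x1 := ev o1 in let x2 := ev o2 in
  act x0 (ev2 psi x1 x2) - act x1 (ev2 psi x0 x2) + act x2 (ev2 psi x0 x1)
  - ev2 psi (br01 x0 x1) x2 + ev2 psi (br01 x0 x2) x1 - ev2 psi (br01 x1 x2) x0.

(* Hermitian inner products for which the above bases are orthonormal *)
Definition ipM m n (u v : 'M[C]_(m, n)) : C :=
  \sum_(i < m) \sum_(j < n) u i j * (v i j)^*.

(* adjoints (formal adjoints w.r.t. ipM, computed in orthonormal bases) *)
Definition dbar1star (psi : 'M[C]_3) : 'M[C]_3 :=
  \matrix_(a, b) ipM psi (dbar1 (delta_mx a b)).
Definition dbar2star (chi : 'rV[C]_3) : 'M[C]_3 :=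
  \matrix_(a, k) ipM chi (dbar2 (delta_mx a k)).

Definition lap2 (psi : 'M[C]_3) : 'M[C]_3 :=
  dbar1 (dbar1star psi) + dbar2star (dbar2 psi).

Definition green (G : 'M[C]_3 -> 'M[C]_3) : Prop :=
  forall psi, (forall h, lap2 h = 0 -> ipM (G psi) h = 0) /\
              lap2 (psi - lap2 (G psi)) = 0.

Definition harm_rep (mu : 'M[C]_3) : Prop :=
  dbar1 mu = 0 /\ forall v, ipM mu (dbar0 v) = 0.

Definition sn (phi psi : 'M[C]_3) : 'M[C]_3 :=
  mk2 (fun x y =>
    pr10 (brk (emb10 (ev1 phi x)) (emb10 (ev1 psi y)))
  + pr10 (brk (emb10 (ev1 psi x)) (emb10 (ev1 phi y)))
  - ev1 phi (pr01 (brk (emb01 x) (emb10 (ev1 psi y)))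
             + pr01 (brk (emb10 (ev1 psi x)) (emb01 y)))
  - ev1 psi (pr01 (brk (emb01 x) (emb10 (ev1 phi y)))
             + pr01 (brk (emb10 (ev1 phi x)) (emb01 y)))).

(* Kuranishi series: phi_1 = mu,                                             *)
(*   phi_r = - 1/2 sum_{s=1}^{r-1} dbar^* G {phi_s, phi_{r-s}}               *)
Definition kur_next (G : 'M[C]_3 -> 'M[C]_3) (l : seq 'M[C]_3) : 'M[C]_3 :=
  - 2^-1 *: dbar1star (G (\sum_(i < size l)
                            sn (nth 0 l i) (nth 0 l (size l - 1 - i)))).

Fixpoint kurs (G : 'M[C]_3 -> 'M[C]_3) (mu : 'M[C]_3) (n : nat) : seq 'M[C]_3 :=
  match n with
  | 0 => [::]
  | n'.+1 => if n' is 0 then [:: mu]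
             else rcons (kurs G mu n') (kur_next G (kurs G mu n'))
  end.

(* phi_r (phi_0 = 0) *)
Definition kur (G : 'M[C]_3 -> 'M[C]_3) (mu : 'M[C]_3) (r : nat) : 'M[C]_3 :=
  nth 0 (kurs G mu r) r.-1.

Definition kur_integrable (G : 'M[C]_3 -> 'M[C]_3) (mu : 'M[C]_3) : Prop :=
  exists Phi : 'M[C]_3,
    (forall a b, (fun N : nat => \sum_(1 <= r < N) kur G mu r a b) @ \oo --> Phi a b)
    /\ dbar1 Phi + 2^-1 *: sn Phi Phi = 0.

(* [conj T_k, T_j] = E_kj W + F_kj conj W ;  Fc k j = F_kj (k,j in {0,1})    *)
Definition Fc (k j : 'I_3) : C := (brk (emb01 (ev k)) (emb10 (ev j))) 0 (@Ordinal 6 5 isT).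

Definition condA_mx (mu : 'M[C]_3) : 'M[C]_3 :=
  \matrix_(j, k)
    (if (j < 2)%N && (k < 2)%N then
       \sum_(i < 3 | (i < 2)%N) (mu i j * Fc k i - mu i k * Fc j i)
     else if (j < 2)%N && (k == o2) then
       \sum_(i < 3 | (i < 2)%N) mu i o2 * Fc j i
     else 0).

Definition condA (mu : 'M[C]_3) : Prop := condA_mx mu = 0.

End W6.

(* In the frame (T1, T2, W, conj T1, conj T2, conj W) the only nonzero brackets are
   [conj T1, T2] = -W and [conj T2, T1] = conj W.  Hence every operator in the statement
   (dbar, its adjoints, the Laplacian, the Schouten-Nijenhuis bracket, Condition A) acts on
   coordinates through a handful of entries, and all the spaces involved are coordinate
   subspaces of 3x3 matrices.  In the Kuranishi series, dbar^* G only sees the entry of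
   {phi_s, phi_(r-s)} built from the (1,1) and (3,3) entries of the phi's, and among the
   phi_r only phi_1 = mu has such entries: so phi_2 = mu^1_1 mu^3_3 conj(omega^2) (x) T2 and
   phi_r = 0 for r >= 3.  The series is the finite sum Phi = mu + phi_2, and for closed mu the
   Maurer-Cartan equation reduces to (mu^1_3)^2 = 0. *)

From HB Require Import structures.
From mathcomp Require Import all_boot all_order all_algebra.
From mathcomp Require Import all_classical all_reals all_analysis.
From mathcomp Require Import ring.
Import GRing.Theory Num.Theory.
Import numFieldNormedType.Exports.
Local Open Scope ring_scope.

Set Implicit Arguments.
Unset Strict Implicit.
Unset Printing Implicit Defensive.

Section CoordinateSubspaces.
Variables (K : fieldType) (m n : nat).
Implicit Types (s : seq ('I_m * 'I_n)) (A : 'M[K]_(m, n)).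

Definition coord_basis s : seq 'M[K]_(m, n) := [seq delta_mx p.1 p.2 | p <- s].

Definition coord_span s : {vspace 'M[K]_(m, n)} := <<coord_basis s>>%VS.

Lemma mem_coord_span s A :
  A \in coord_span s <-> forall i j, (i, j) \notin s -> A i j = 0.
Proof.
elim: s A => [|[i' j'] s IHs] A; rewrite /coord_span /coord_basis /=.
  rewrite span_nil memv0; split=> [/eqP -> i j _|A0]; first by rewrite mxE.
  by apply/eqP/matrixP=> i j; rewrite mxE A0.
rewrite span_cons; split.
  case/memv_addP=> _ /vlineP[k ->] [B /IHs B0 ->] i j.
  rewrite in_cons negb_or => /andP[ne_ij ij_s].
  by rewrite !mxE B0 // -xpair_eqE (negbTE ne_ij) mulr0 addr0.
move=> A0; apply/memv_addP; exists (A i' j' *: delta_mx i' j').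
  by apply/vlineP; exists (A i' j').
exists (A - A i' j' *: delta_mx i' j'); last by rewrite addrC subrK.
apply/IHs=> i j ij_s; rewrite !mxE.
have [[-> ->]|ne_ij] := eqVneq (i, j) (i', j'); first by rewrite !eqxx mulr1 subrr.
rewrite -xpair_eqE (negbTE ne_ij) mulr0 subr0; apply: A0.
by rewrite in_cons negb_or ne_ij.
Qed.

Lemma dim_coord_span s : uniq s -> \dim (coord_span s) = size s.
Proof.
move=> s_uniq; suff: free (coord_basis s) by move/eqP->; rewrite size_map.
elim: s s_uniq => [|[i j] s IHs] /=; first by rewrite /free span_nil dimv0.
case/andP=> ij_s s_uniq; rewrite free_cons IHs // andbT.
apply/negP=> /mem_coord_span/(_ i j ij_s).
by rewrite mxE !eqxx => /eqP; rewrite oner_eq0.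
Qed.

End CoordinateSubspaces.

Arguments coord_span {K m n} s.

Lemma sum_ord3 (V : nmodType) (F : 'I_3 -> V) : \sum_(i < 3) F i = F o0 + F o1 + F o2.
Proof.
rewrite !big_ord_recl big_ord0 addr0 !addrA.
by congr (_ + _ + _); congr F; apply/val_inj.
Qed.

Local Notation i0 := (@Ordinal 6 0 isT).
Local Notation i1 := (@Ordinal 6 1 isT).
Local Notation i2 := (@Ordinal 6 2 isT).
Local Notation i3 := (@Ordinal 6 3 isT).
Local Notation i4 := (@Ordinal 6 4 isT).
Local Notation i5 := (@Ordinal 6 5 isT).

Lemma sum_ord6 (V : nmodType) (F : 'I_6 -> V) :
  \sum_(i < 6) F i = F i0 + F i1 + F i2 + F i3 + F i4 + F i5.
Proof.
rewrite !big_ord_recl big_ord0 addr0 !addrA.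
by congr (_ + _ + _ + _ + _ + _); congr F; apply/val_inj.
Qed.

Lemma ord3P (a : 'I_3) : [\/ a = o0, a = o1 | a = o2].
Proof.
by case: a => [[|[|[|//]]] ?]; [constructor 1 | constructor 2 | constructor 3]; apply/val_inj.
Qed.

Ltac case3 a := case: (ord3P a) => ->.

Ltac frame_simpl C :=
  rewrite /= ?big_ord1 ?sum_ord3 ?sum_ord6 ?mxE /=
          ?rmorphD ?rmorphN ?rmorphM ?rmorph1 ?rmorph0 /=
          ?conjCi ?conjC1 ?conjC0 ?rmorphN /= ?conjCi ?opprK;
  try done; try (field: (@sqrCi C)); try done.

Section Frame.
Variable C : numClosedFieldType.
Implicit Types a b c d : 'rV[C]_3.

Lemma lieCE (u v : 'rV[C]_6) : lieC u v =
    (- 2^-1 * (u 0 i0 * v 0 i2 - u 0 i2 * v 0 i0 - u 0 i1 * v 0 i3 + u 0 i3 * v 0 i1)) *: ev C i4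
  + (- 2^-1 * (u 0 i0 * v 0 i3 - u 0 i3 * v 0 i0 + u 0 i1 * v 0 i2 - u 0 i2 * v 0 i1)) *: ev C i5.
Proof.
apply/rowP => l; rewrite /lieC !sum_ord6 /w6br /w6br0 /= !mxE.
by case: l => [[|[|[|[|[|[|//]]]]]] ?] /=; rewrite ?mxE /=; ring.
Qed.

(* [Fr C] is this block matrix, but its type ['M_6] hides the split [3 + 3] the block
   lemmas need. *)
Lemma frame_mul_conjT (Fr := col_mx (F10 C) (map_mx Num.conj (F10 C))) :
  Fr *m (map_mx Num.conj Fr)^T = 2%:M.
Proof.
rewrite /Fr map_col_mx tr_col_mx mul_col_row (scalar_mx_block 3 3).
congr block_mx; apply/matrixP=> i j; rewrite !mxE sum_ord6 !mxE.
all: by case3 i; case3 j; frame_simpl C.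
Qed.

Lemma Fr_unit : Fr C \in unitmx.
Proof.
have inv_Fr : Fr C *m (2^-1 *: (map_mx Num.conj (Fr C))^T) = 1%:M.
  by rewrite -scalemxAr (frame_mul_conjT : Fr C *m _ = _) scale_scalar_mx mulVf ?pnatr_eq0.
by case: (mulmx1_unit inv_Fr).
Qed.

Lemma row_mx_mulFr a b :
  row_mx a b *m Fr C = a *m F10 C + b *m map_mx Num.conj (F10 C).
Proof. exact: mul_row_col. Qed.

Lemma brk_row_mx a b c d : brk (row_mx a b) (row_mx c d) =
  row_mx ((a 0 o1 * d 0 o0 - b 0 o0 * c 0 o1) *: ev C o2)
         ((b 0 o1 * c 0 o0 - a 0 o0 * d 0 o1) *: ev C o2).
Proof.
set z := (X in _ = X).
suff lie_z : lieC (row_mx a b *m Fr C) (row_mx c d *m Fr C) = z *m Fr C.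
  by rewrite /brk lie_z -mulmxA mulmxV ?Fr_unit // mulmx1.
apply/rowP=> k; rewrite /z !row_mx_mulFr lieCE !mxE !sum_ord3 !mxE.
by case: k => [[|[|[|[|[|[|//]]]]]] ?]; frame_simpl C.
Qed.

End Frame.

Section Operators.
Variable C : numClosedFieldType.
Implicit Types (x y v w : 'rV[C]_3) (mu phi psi : 'M[C]_3).

Lemma actE x v : act x v = - (x 0 o0 * v 0 o1) *: ev C o2.
Proof. by apply/rowP=> i; rewrite /act brk_row_mx /pr10 row_mxKl !mxE; ring. Qed.

Lemma br01_eq0 x y : br01 x y = 0.
Proof. by apply/rowP=> i; rewrite /br01 brk_row_mx /pr01 row_mxKr !mxE; ring. Qed.

Lemma pr01_brk01_10 x w : pr01 (brk (emb01 x) (emb10 w)) = (x 0 o1 * w 0 o0) *: ev C o2.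
Proof. by apply/rowP=> i; rewrite brk_row_mx /pr01 row_mxKr !mxE; ring. Qed.

Lemma pr01_brk10_01 w y : pr01 (brk (emb10 w) (emb01 y)) = - (w 0 o0 * y 0 o1) *: ev C o2.
Proof. by apply/rowP=> i; rewrite brk_row_mx /pr01 row_mxKr !mxE; ring. Qed.

Lemma pr10_brk10_10 w y : pr10 (brk (emb10 w) (emb10 y)) = 0.
Proof. by apply/rowP=> i; rewrite brk_row_mx /pr10 row_mxKl !mxE; ring. Qed.

Lemma ev1E mu y : ev1 mu y = \row_a (y 0 o0 * mu a o0 + y 0 o1 * mu a o1 + y 0 o2 * mu a o2).
Proof. by apply/rowP=> a; rewrite !mxE sum_ord3 !mxE. Qed.

Lemma dbar0E v : dbar0 v = - v 0 o1 *: delta_mx o2 o0.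
Proof. by apply/matrixP=> a b; rewrite mxE actE; case3 a; case3 b; frame_simpl C. Qed.

Lemma dbar1E mu : dbar1 mu = - mu o1 o1 *: delta_mx o2 o0 - mu o1 o2 *: delta_mx o2 o1.
Proof.
apply/matrixP=> a k; rewrite mxE !br01_eq0 !actE !ev1E /pp /qq.
by case3 a; case3 k; frame_simpl C.
Qed.

Lemma dbar2E psi : dbar2 psi = - psi o1 o2 *: ev C o2.
Proof.
by apply/rowP=> a; rewrite /dbar2 !br01_eq0 !actE /ev2 /pp /qq; case3 a; frame_simpl C.
Qed.

Lemma dbar1starE psi :
  dbar1star psi = - psi o2 o0 *: delta_mx o1 o1 - psi o2 o1 *: delta_mx o1 o2.
Proof. by apply/matrixP=> a b; rewrite mxE /ipM dbar1E; case3 a; case3 b; frame_simpl C. Qed.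

Lemma dbar2starE (chi : 'rV[C]_3) : dbar2star chi = - chi 0 o2 *: delta_mx o1 o2.
Proof. by apply/matrixP=> a b; rewrite mxE /ipM dbar2E; case3 a; case3 b; frame_simpl C. Qed.

Lemma lap2E psi : lap2 psi =
  psi o2 o0 *: delta_mx o2 o0 + psi o2 o1 *: delta_mx o2 o1 + psi o1 o2 *: delta_mx o1 o2.
Proof.
apply/matrixP=> a b; rewrite /lap2 dbar1E dbar1starE dbar2E dbar2starE.
by case3 a; case3 b; frame_simpl C.
Qed.

Lemma snE phi psi : sn phi psi = \matrix_(a, k)
  (if k == o0 then psi o0 o0 * phi a o2 + phi o0 o0 * psi a o2
   else if k == o2 then - (psi o0 o2 * phi a o2 + phi o0 o2 * psi a o2) else 0).
Proof.
apply/matrixP=> a k.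
rewrite mxE !pr10_brk10_10 !pr01_brk01_10 !pr01_brk10_01 !ev1E /pp /qq.
by case3 a; case3 k; frame_simpl C.
Qed.

Lemma FcE k j : Fc C k j = ev C k 0 o1 * ev C j 0 o0.
Proof.
rewrite /Fc brk_row_mx (_ : @Ordinal 6 5 isT = rshift 3 o2); last exact: val_inj.
by rewrite mxE (unsplitK (inr _ o2)) !mxE eqxx mulr1 mulr0 subr0.
Qed.

Lemma condA_mxE mu : condA_mx mu =
  mu o0 o0 *: delta_mx o0 o1 - mu o0 o0 *: delta_mx o1 o0 + mu o0 o2 *: delta_mx o1 o2.
Proof.
apply/matrixP=> j k; rewrite mxE.
by case3 j; case3 k; rewrite /= ?big_mkcond ?sum_ord3 ?FcE; frame_simpl C.
Qed.

End Operators.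

Section Cohomology.
Variable C : numClosedFieldType.
Implicit Types (v : 'rV[C]_3) (mu : 'M[C]_3).

Lemma dbar1_eq0 mu : dbar1 mu = 0 <-> mu o1 o1 = 0 /\ mu o1 o2 = 0.
Proof.
rewrite dbar1E; split=> [/matrixP dmu0 | [-> ->]]; last first.
  by rewrite oppr0 !scale0r subrr.
move: (dmu0 o2 o0) (dmu0 o2 o1); rewrite !mxE /= !(mulr1, mulr0, subr0, sub0r).
by move=> /eqP + /eqP; rewrite !oppr_eq0 => /eqP-> /eqP->.
Qed.

Lemma ipM_dbar0 mu v : ipM mu (dbar0 v) = - (mu o2 o0 * (v 0 o1)^*).
Proof. by rewrite /ipM dbar0E; frame_simpl C. Qed.

Lemma harm_repP mu : harm_rep mu <-> dbar1 mu = 0 /\ mu o2 o0 = 0.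
Proof.
split=> -[dmu0 mu_orth]; split=> //; last first.
  by move=> v; rewrite ipM_dbar0 mu_orth mul0r oppr0.
move: (mu_orth (ev C o1)); rewrite ipM_dbar0 !mxE /= conjC1 mulr1.
by move=> /eqP; rewrite oppr_eq0 => /eqP.
Qed.

Lemma condAP mu : condA mu <-> mu o0 o0 = 0 /\ mu o0 o2 = 0.
Proof.
rewrite /condA condA_mxE; split=> [/matrixP cA | [-> ->]]; last first.
  by rewrite !scale0r subrr addr0.
move: (cA o0 o1) (cA o1 o2); rewrite !mxE /= !(mulr1, mulr0, subr0, sub0r, addr0, add0r).
by move=> -> ->.
Qed.

Definition closed_space : {vspace 'M[C]_3} :=
  coord_span [:: (o0, o0); (o0, o1); (o0, o2); (o1, o0); (o2, o0); (o2, o1); (o2, o2)].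
Definition exact_space : {vspace 'M[C]_3} := coord_span [:: (o2, o0)].
Definition abelian_space : {vspace 'M[C]_3} :=
  coord_span [:: (o0, o1); (o1, o0); (o2, o0); (o2, o1); (o2, o2)].
Definition kuranishi_space : {vspace 'M[C]_3} :=
  coord_span [:: (o0, o0); (o0, o1); (o1, o0); (o2, o1); (o2, o2)].

Lemma mem_closed_space mu : mu \in closed_space <-> dbar1 mu = 0.
Proof.
rewrite mem_coord_span dbar1_eq0.
split=> [mu0 | [mu11 mu12] a b]; first by split; apply: mu0.
by case3 a; case3 b.
Qed.

Lemma mem_exact_space mu : mu \in exact_space <-> exists v, mu = dbar0 v.
Proof.
rewrite mem_coord_span; split=> [mu0 | [v ->] a b]; last first.
  by rewrite dbar0E !mxE; case3 a; case3 b; rewrite /= ?(mulr0, mulr1, oppr0).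
exists (- mu o2 o0 *: ev C o1); apply/matrixP=> a b; rewrite dbar0E !mxE.
by case3 a; case3 b; rewrite /= ?(mulr0, mulr1, oppr0, opprK) //; apply: mu0.
Qed.

Lemma mem_abelian_space mu : mu \in abelian_space <-> dbar1 mu = 0 /\ condA mu.
Proof.
rewrite mem_coord_span dbar1_eq0 condAP.
split=> [mu0 | [[mu11 mu12] [mu00 mu02]] a b]; first by split; split; apply: mu0.
by case3 a; case3 b.
Qed.

Lemma mem_kuranishi_space mu : mu \in kuranishi_space <-> harm_rep mu /\ mu o0 o2 = 0.
Proof.
rewrite mem_coord_span harm_repP dbar1_eq0.
split=> [mu0 | [[[mu11 mu12] mu20] mu02] a b].
  by split; [split; [split|]|]; apply: mu0.
by case3 a; case3 b.
Qed.

Lemma exact_sub_abelian : (exact_space <= abelian_space)%VS.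
Proof.
apply/subvP=> _ /mem_exact_space[v ->]; apply/mem_abelian_space.
by rewrite dbar1_eq0 condAP dbar0E !mxE /= !mulr0.
Qed.

End Cohomology.

Section Kuranishi.
Variable C : numClosedFieldType.
Local Open Scope classical_set_scope.
Implicit Types (mu psi : 'M[C]_3) (l : seq 'M[C]_3) (G : 'M[C]_3 -> 'M[C]_3).

Lemma green_row2 G psi : green G -> G psi o2 o0 = psi o2 o0 /\ G psi o2 o1 = psi o2 o1.
Proof.
move=> /(_ psi)[_ /matrixP harm]; move: (harm o2 o0) (harm o2 o1).
rewrite !lap2E !mxE /= !(mulr1, mulr0, addr0, add0r, subr0).
by move=> /eqP + /eqP; rewrite !subr_eq0 => /eqP-> /eqP->.
Qed.

Definition sn_conv l : 'M[C]_3 :=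
  \sum_(i < size l) sn (nth 0 l i) (nth 0 l (size l - 1 - i)).

Lemma sn_conv21 l : sn_conv l o2 o1 = 0.
Proof. by rewrite summxE big1 // => i _; rewrite snE mxE. Qed.

Lemma sn_conv20 l : sn_conv l o2 o0 = \sum_(i < size l)
  (nth 0 l (size l - 1 - i) o0 o0 * nth 0 l i o2 o2
   + nth 0 l i o0 o0 * nth 0 l (size l - 1 - i) o2 o2).
Proof. by rewrite summxE; apply: eq_bigr => i _; rewrite snE mxE. Qed.

Lemma kur_nextE G l : green G -> kur_next G l = (2^-1 * sn_conv l o2 o0) *: delta_mx o1 o1.
Proof.
move=> greenG; rewrite /kur_next -/(sn_conv l) dbar1starE.
have [-> ->] := green_row2 (sn_conv l) greenG.
by apply/matrixP=> a b; rewrite sn_conv21 !mxE; ring.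
Qed.

Definition phi2 mu : 'M[C]_3 := (mu o0 o0 * mu o2 o2) *: delta_mx o1 o1.

Lemma kur2 G mu : green G -> kur G mu 2 = phi2 mu.
Proof.
move=> greenG; rewrite /kur /= kur_nextE // sn_conv20 big_ord1 /=.
by apply/matrixP=> a b; rewrite !mxE; field.
Qed.

Lemma kursE G mu n : green G -> kurs G mu n.+2 = [:: mu, phi2 mu & nseq n 0].
Proof.
move=> greenG; elim: n => [|n IHn]; first by rewrite /= -(kur2 mu greenG).
rewrite (_ : kurs G mu n.+3 = rcons (kurs G mu n.+2) (kur_next G (kurs G mu n.+2))) // IHn.
set l := [:: mu, phi2 mu & nseq n 0].
have phi_r_vanish k : k != 0%N -> nth 0 l k o0 o0 = 0 /\ nth 0 l k o2 o2 = 0.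
  case: k => [//|[|k]] _ /=; first by rewrite !mxE /= !mulr0.
  by rewrite nth_nseq; case: ifP => _; rewrite !mxE.
rewrite kur_nextE // sn_conv20 big1 ?mulr0 ?scale0r; last first.
  move=> i _; have [i_eq0 | i_neq0] := eqVneq (i : nat) 0%N.
    rewrite i_eq0 subn0; have /(_ isT)[-> ->] := phi_r_vanish (size l - 1)%N.
    by rewrite !mul0r mulr0 addr0.
  by have [-> ->] := phi_r_vanish i i_neq0; rewrite mulr0 mul0r addr0.
by rewrite /l !rcons_cons -cats1 -[[:: 0]]/(nseq 1 0) -nseqD addn1.
Qed.

Lemma kurE G mu r : green G ->
  kur G mu r = if r == 1%N then mu else if r == 2%N then phi2 mu else 0.
Proof.
move=> greenG; case: r => [|[|r]] //; rewrite /kur kursE //.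
by case: r => [|r] //; rewrite -[nth _ _ _]/(nth 0 (nseq r.+1 0) r) nth_nseq if_same.
Qed.

Lemma kur_partial_sum G mu N : green G -> (3 <= N)%N ->
  \sum_(1 <= r < N) kur G mu r = mu + phi2 mu.
Proof.
move=> greenG N_ge3.
rewrite big_ltn ?(leq_trans _ N_ge3) // big_ltn ?(leq_trans _ N_ge3) //.
rewrite big_nat big1 ?addr0 => [|r /andP[r_ge3 _]]; first by rewrite !kurE.
by rewrite kurE //; case: r r_ge3 => [|[|[|r]]].
Qed.

Lemma kur_series_cvg G mu a b : green G ->
  (fun N : nat => \sum_(1 <= r < N) kur G mu r a b) @ \oo --> (mu + phi2 mu) a b.
Proof.
move=> greenG; apply: cvg_near_cst; near=> N.
by rewrite -summxE kur_partial_sum //; near: N; exact: nbhs_infty_ge.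
Unshelve. all: by end_near.
Qed.

Lemma maurer_cartan_kur mu (Phi := mu + phi2 mu) : dbar1 mu = 0 ->
  dbar1 Phi + 2^-1 *: sn Phi Phi =
  mu o0 o2 *: (mu o0 o0 *: delta_mx o0 o0 - mu o0 o2 *: delta_mx o0 o2
                - mu o2 o2 *: delta_mx o2 o2).
Proof.
move=> /dbar1_eq0[mu11 mu12]; apply/matrixP=> a b; rewrite /Phi dbar1E snE /phi2 !mxE.
case3 a; case3 b; rewrite /= ?mu11 ?mu12.
all: by rewrite ?(mulr0, mul0r, mulr1, addr0, add0r, subr0, oppr0); field.
Qed.

Lemma kur_integrableP G mu : green G -> dbar1 mu = 0 ->
  kur_integrable G mu <-> mu o0 o2 = 0.
Proof.
move=> greenG dmu0.
have limE (Phi : 'M[C]_3) :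
    (forall a b, (fun N : nat => \sum_(1 <= r < N) kur G mu r a b) @ \oo --> Phi a b) ->
    Phi = mu + phi2 mu.
  move=> cvg_Phi; apply/matrixP=> a b.
  exact: norm_cvg_unique (cvg_Phi a b) (kur_series_cvg greenG).
split=> [[Phi [/limE-> /matrixP/(_ o0 o2)]] | mu02].
  rewrite maurer_cartan_kur // !mxE /= !(mulr0, mulr1, subr0, sub0r) => /eqP.
  by rewrite mulrN oppr_eq0 mulf_eq0 orbb => /eqP.
exists (mu + phi2 mu); split=> [a b|]; first exact: kur_series_cvg.
by rewrite maurer_cartan_kur // mu02 scale0r.
Qed.

End Kuranishi.

Theorem mainTheorem14 (C : numClosedFieldType) :
  (forall mu : 'M[C]_3, dbar1 mu = 0 <-> (mu o1 o1 = 0 /\ mu o1 o2 = 0)) /\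
  (exists Z B : {vspace 'M[C]_3},
      (forall mu, mu \in Z <-> dbar1 mu = 0) /\
      (forall mu, mu \in B <-> exists v : 'rV[C]_3, mu = dbar0 v) /\
      \dim Z = (\dim B + 6)%N) /\
  (forall mu : 'M[C]_3, harm_rep mu <-> (dbar1 mu = 0 /\ mu o2 o0 = 0)) /\
  (forall mu : 'M[C]_3, dbar1 mu = 0 -> (condA mu <-> (mu o0 o0 = 0 /\ mu o0 o2 = 0))) /\
  (exists Ab B : {vspace 'M[C]_3},
      (forall mu, mu \in Ab <-> (dbar1 mu = 0 /\ condA mu)) /\
      (forall mu, mu \in B <-> exists v : 'rV[C]_3, mu = dbar0 v) /\
      (B <= Ab)%VS /\ \dim Ab = (\dim B + 4)%N) /\
  (forall G : 'M[C]_3 -> 'M[C]_3, green G ->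
     (forall mu, harm_rep mu -> kur G mu 2 = (mu o0 o0 * mu o2 o2) *: delta_mx o1 o1) /\
     (exists eps : C, 0 < eps /\
        forall mu, harm_rep mu -> (forall a b, `|mu a b| < eps) ->
          (kur_integrable G mu <-> mu o0 o2 = 0))) /\
  (exists K : {vspace 'M[C]_3}, \dim K = 5%N /\
      forall mu, mu \in K <-> (harm_rep mu /\ mu o0 o2 = 0)).
Proof.
split; first exact: dbar1_eq0.
split.
  exists (closed_space C), (exact_space C); split; first exact: mem_closed_space.
  by split; [exact: mem_exact_space | rewrite !dim_coord_span].
split; first exact: harm_repP.
split; first by move=> mu _; exact: condAP.
split.
  exists (abelian_space C), (exact_space C); split; first exact: mem_abelian_space.
  split; first exact: mem_exact_space.
  by split; [exact: exact_sub_abelian | rewrite !dim_coord_span].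
split.
  move=> G greenG; split=> [mu _|]; first exact: kur2.
  (* The series terminates, so integrability needs no smallness: any eps works. *)
  exists 1; split=> [|mu /harm_repP[dmu0 _] _]; first exact: ltr01.
  exact: kur_integrableP.
exists (kuranishi_space C); split; first by rewrite dim_coord_span.
exact: mem_kuranishi_space.
Qed.
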